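(* Fix $x\in\mathbf{X}$ and temperatures $\tau_1,\dots,\tau_T>0$. (i) Suppose $H_{TP}(x)\le\delta$, and define OOD detectors by $\mathbf{P}'_k(x\in\mathbf{X}_k\mid D)=\mathbf{P}(x\in\mathbf{X}_k\mid D)^{1/\tau_k}$. Then for all $k=1,\dots,T$, $H_{OOD,k}(x)\le\max\big(\delta/\tau_k,\ -\log(1-(1-e^{-\delta})^{1/\tau_k})\big)$. (ii) Suppose OOD detectors satisfy $H_{OOD,k}(x)\le\delta_k$ for $k=1,\dots,T$, and define $\mathbf{P}(x\in\mathbf{X}_k\mid D)=\frac{\mathbf{P}'_k(x\in\mathbf{X}_k\mid D)^{1/\tau_k}}{\sum_j\mathbf{P}'_j(x\in\mathbf{X}_j\mid D)^{1/\tau_j}}$. Then $$H_{TP}(x)\le\sum_k\frac{\mathbf{1}_{x\in\mathbf{X}_k}\delta_k}{\tau_k}+\frac{\sum_k(1-e^{-\delta_k})^{1/\tau_k}}{\sum_k\mathbf{1}_{x\in\mathbf{X}_k}\big(1-(1-e^{-\delta_k})^{1/\tau_k}\big)},$$ where $\mathbf{1}_{x\in\mathbf{X}_k}$ is the indicator of $x\in\mathbf{X}_k$.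
   Context: $\mathbf{X}$ is an input domain which is the disjoint union of task domains $\mathbf{X}_1,\dots,\mathbf{X}_T$. $D$ is a fixed conditioning event. A task-id prediction (TP) is a categorical distribution $\{\mathbf{P}(x\in\mathbf{X}_k\mid D)\}_{k=1}^T$ over the tasks (nonnegative, summing to $1$); for $x\in\mathbf{X}_{k_0}$, $H_{TP}(x)=-\log\mathbf{P}(x\in\mathbf{X}_{k_0}\mid D)$. An OOD detector for task $k$ is a value $\mathbf{P}'_k(x\in\mathbf{X}_k\mid D)\in[0,1]$ with $\mathbf{P}'_k(x\notin\mathbf{X}_k\mid D)=1-\mathbf{P}'_k(x\in\mathbf{X}_k\mid D)$, and $H_{OOD,k}(x)=-\log\mathbf{P}'_k(x\in\mathbf{X}_k\mid D)$ if $x\in\mathbf{X}_k$, $H_{OOD,k}(x)=-\log\mathbf{P}'_k(x\notin\mathbf{X}_k\mid D)$ if $x\in\mathbf{X}\setminus\mathbf{X}_k$. *)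

From HB Require Import structures.
From mathcomp Require Import all_boot all_order all_algebra.
From mathcomp Require Import all_classical all_reals all_analysis.
Set Implicit Arguments. Unset Strict Implicit. Unset Printing Implicit Defensive.
Import Order.TTheory GRing.Theory Num.Theory.
Local Open Scope ring_scope.

Section Defs.
Variable R : realType.

Definition neglog (p : R) : \bar R :=
  if p == 0 then +oo%E else (- ln p)%:E.

Definition is_TP (T : nat) (p : 'I_T -> R) : Prop :=
  (forall k, 0 <= p k) /\ \sum_(k < T) p k = 1.

Definition is_OOD (T : nat) (q : 'I_T -> R) : Prop :=
  forall k, 0 <= q k <= 1.

(* The domain X is the disjoint union of X_1..X_T, encoded by the map
   [task : X -> 'I_T] sending each point to the unique task containing it;
   x \in X_k  <->  task x == k. *)

Definition H_TP (X : Type) (T : nat) (task : X -> 'I_T) (p : 'I_T -> R) (x : X)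
  : \bar R := neglog (p (task x)).

Definition H_OOD (X : Type) (T : nat) (task : X -> 'I_T) (q : 'I_T -> R)
  (k : 'I_T) (x : X) : \bar R :=
  if task x == k then neglog (q k) else neglog (1 - q k).

End Defs.

(* Read [neglog p <= r] as [exp (-r) <= p].  For (i), the bound
   [exp (-delta) <= p_k0] on the true task [k0] survives the power [1/tau_k0],
   while every other task has [p_k <= 1 - p_k0 <= 1 - exp (-delta)].
   For (ii), the true score [a = q_k0^(1/tau_k0)] is at least
   [exp (-delta_k0/tau_k0)] and every other task has [q_j <= 1 - exp (-delta_j)],
   so the normaliser [S] exceeds [a] by at most
   [sum_j (1 - exp (-delta_j))^(1/tau_j)]; then [S <= exp (S - 1) <= exp (S - a)],
   and the denominator of the stated bound lies in [(0, 1]]. *)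
From HB Require Import structures.
From mathcomp Require Import all_boot all_order all_algebra.
From mathcomp Require Import all_classical all_reals all_analysis.
Set Implicit Arguments. Unset Strict Implicit. Unset Printing Implicit Defensive.
Import Order.TTheory GRing.Theory Num.Theory.
Local Open Scope ring_scope.

Section NegLog.
Variable R : realType.
Implicit Types p b r s : R.

Lemma neglog_le p r : 0 <= p -> (neglog p <= r%:E)%E = (expR (- r) <= p).
Proof.
rewrite /neglog le_eqVlt => /predU1P[<-|p_gt0].
  by rewrite eqxx leye_eq lt_geF ?expR_gt0.
by rewrite gt_eqF // lee_fin lerNl -[in RHS](lnK p_gt0) ler_expR.
Qed.

Lemma neglog_1B_le p r : p <= 1 -> (neglog (1 - p) <= r%:E)%E = (p <= 1 - expR (- r)).
Proof. by move=> p_le1; rewrite neglog_le ?subr_ge0 // lerBrDl lerBrDr. Qed.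

Lemma neglog_le_neglog p b : 0 < b -> b <= p -> (neglog p <= neglog b)%E.
Proof.
move=> b_gt0 bp; have p_gt0 := lt_le_trans b_gt0 bp.
by rewrite /neglog !gt_eqF // lee_fin lerN2 ler_ln.
Qed.

Lemma expRN_le_powR p r s :
  0 <= s -> expR (- r) <= p -> expR (- (r * s)) <= p `^ s.
Proof.
move=> s_ge0 rp; rewrite -mulNr expRM.
by apply: ge0_ler_powR; rewrite ?nnegrE ?(ltW (expR_gt0 _)) ?(le_trans _ rp).
Qed.

Lemma neglog_powR_le p r s : 0 <= p -> 0 <= s ->
  (neglog p <= r%:E)%E -> (neglog (p `^ s) <= (r * s)%:E)%E.
Proof.
by move=> p_ge0 s_ge0; rewrite !neglog_le ?powR_ge0 //; exact: expRN_le_powR.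
Qed.

Lemma powR_lt1 b s : 0 <= b -> b < 1 -> 0 < s -> b `^ s < 1.
Proof.
move=> b_ge0 b_lt1 s_gt0.
by have := gt0_ltr_powR s_gt0 b_ge0 ler01 b_lt1; rewrite powR1.
Qed.

Lemma powR_le1 b s : 0 <= b -> b <= 1 -> 0 <= s -> b `^ s <= 1.
Proof.
move=> b_ge0 b_le1 s_ge0.
by have := ge0_ler_powR s_ge0 b_ge0 ler01 b_le1; rewrite powR1.
Qed.

Lemma neglog_1B_powR_le p b s : 0 <= p -> p <= b -> b < 1 -> 0 < s ->
  (neglog (1 - p `^ s) <= neglog (1 - b `^ s))%E.
Proof.
move=> p_ge0 pb b_lt1 s_gt0; have b_ge0 := le_trans p_ge0 pb.
apply: neglog_le_neglog; first by rewrite subr_gt0 powR_lt1.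
by rewrite lerB // ge0_ler_powR ?nnegrE // ltW.
Qed.

Lemma le_expR_subr (S a : R) : a <= 1 -> S <= expR (S - a).
Proof.
move=> a_le1; have := expR_ge1Dx (S - 1); rewrite addrC subrK => /le_trans.
by apply; rewrite ler_expR lerB.
Qed.

Lemma expRN_le_div (a S u v : R) : 0 < a -> a <= 1 -> a <= S ->
  expR (- u) <= a -> S - a <= v -> expR (- (u + v)) <= a / S.
Proof.
move=> a_gt0 a_le1 aS ua Sav; have S_gt0 := lt_le_trans a_gt0 aS.
rewrite opprD expRD ler_pdivlMr // -mulrA; apply: le_trans ua.
rewrite ler_piMr ?expR_ge0 // expRN mulrC ler_pdivrMr ?expR_gt0 // mul1r.
by apply: le_trans (le_expR_subr S a_le1) _; rewrite ler_expR.
Qed.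

End NegLog.

Section Sums.
Variables (R : realType) (I : finType).
Implicit Types F G : I -> R.

Lemma sum_indicator (i0 : I) F : \sum_i (i0 == i)%:R * F i = F i0.
Proof.
rewrite (bigD1 i0) //= eqxx mul1r big1 ?addr0 // => i /negbTE.
by rewrite eq_sym => ->; rewrite mul0r.
Qed.

Lemma sumrB1_le (i0 : I) F G : (forall i, 0 <= G i) ->
  (forall i, i != i0 -> F i <= G i) -> \sum_i F i - F i0 <= \sum_i G i.
Proof.
move=> G_ge0 FG; rewrite (bigD1 i0) //= addrC addrK [leRHS](bigD1 i0) //=.
by rewrite ler_wpDl // ler_sum.
Qed.

Lemma le1B_sum1 (p : I -> R) i j :
  (forall i, 0 <= p i) -> \sum_i p i = 1 -> j != i -> p j <= 1 - p i.
Proof.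
move=> p_ge0 p_sum1 ji; rewrite -p_sum1 (bigD1 i) //= (bigD1 j) //=.
by rewrite addrC addrK lerDl; apply: sumr_ge0 => k _.
Qed.

End Sums.

Section TaskIdPrediction.
Variables (R : realType) (X : Type) (T : nat) (task : X -> 'I_T) (x : X).
Variable tau : 'I_T -> R.
Hypothesis tau_gt0 : forall k, 0 < tau k.

Let inv_tau_gt0 k : 0 < (tau k)^-1.
Proof. by rewrite invr_gt0. Qed.

Lemma H_OOD_le_own (q : 'I_T -> R) d : 0 <= q (task x) ->
  (H_OOD task q (task x) x <= d%:E)%E = (expR (- d) <= q (task x)).
Proof. by move=> q_ge0; rewrite /H_OOD eqxx neglog_le. Qed.

Lemma H_OOD_le_other (q : 'I_T -> R) k d : task x != k -> q k <= 1 ->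
  (H_OOD task q k x <= d%:E)%E = (q k <= 1 - expR (- d)).
Proof. by move=> /negbTE xk q_le1; rewrite /H_OOD xk neglog_1B_le. Qed.

Lemma TP_to_OOD (p : 'I_T -> R) (delta : R) :
  is_TP p -> (H_TP task p x <= delta%:E)%E ->
  forall k, (H_OOD task (fun j => (p j `^ (tau j)^-1)%R) k x <=
    Order.max (delta / tau k)%:E
              (neglog (1 - (1 - expR (- delta)) `^ (tau k)^-1)%R))%E.
Proof.
move=> [p_ge0 p_sum1]; rewrite /H_TP /H_OOD; set k0 := task x => TP_k0 k.
case: eqP => [<-|/eqP k0k]; rewrite le_max; apply/orP; [left|right].
  exact: neglog_powR_le (p_ge0 _) (ltW (inv_tau_gt0 _)) TP_k0.
have p_k0 : expR (- delta) <= p k0 by rewrite -neglog_le.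
have k_k0 : k != k0 by rewrite eq_sym.
apply: neglog_1B_powR_le => //.
- by apply: le_trans (le1B_sum1 p_ge0 p_sum1 k_k0) _; rewrite lerB.
- by rewrite ltrBlDr ltrDl expR_gt0.
Qed.

Lemma OOD_to_TP (q delta : 'I_T -> R) :
  is_OOD q -> (forall k, (H_OOD task q k x <= (delta k)%:E)%E) ->
  (H_TP task (fun k => (q k `^ (tau k)^-1 / \sum_(j < T) q j `^ (tau j)^-1)%R) x <=
   (\sum_(k < T) (task x == k)%:R * delta k / tau k
    + (\sum_(k < T) (1 - expR (- delta k)) `^ (tau k)^-1)
      / (\sum_(k < T) (task x == k)%:R
           * (1 - (1 - expR (- delta k)) `^ (tau k)^-1)))%:E)%E.
Proof.
move=> q01 q_delta; rewrite /H_TP; set k0 := task x.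
have q_ge0 j : 0 <= q j by case/andP: (q01 j).
have q_le1 j : q j <= 1 by case/andP: (q01 j).
have q_k0 : expR (- delta k0) <= q k0 by rewrite -H_OOD_le_own.
have q_j j : j != k0 -> q j <= 1 - expR (- delta j).
  by move=> j_k0; rewrite -H_OOD_le_other // eq_sym.
rewrite [X in (X + _)%R](eq_bigr (fun k => (k0 == k)%:R * (delta k / tau k))).
  2: by move=> k _; rewrite mulrA.
rewrite !sum_indicator.
set a := q k0 `^ (tau k0)^-1; set S := \sum_(j < T) q j `^ (tau j)^-1.
set D := 1 - (1 - expR (- delta k0)) `^ (tau k0)^-1.
have D_gt0 : 0 < D.
  by rewrite subr_gt0 powR_lt1 ?subr_ge0 ?(le_trans q_k0) ?ltrBlDr ?ltrDl ?expR_gt0.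
have D_le1 : D <= 1 by rewrite lerBlDr lerDl powR_ge0.
have a_gt0 : 0 < a by rewrite powR_gt0 // (lt_le_trans (expR_gt0 _) q_k0).
have a_le_S : a <= S.
  by rewrite /S (bigD1 k0) //= lerDl sumr_ge0 // => j _; exact: powR_ge0.
rewrite neglog_le ?divr_ge0 ?(ltW a_gt0) ?(le_trans (ltW a_gt0)) //.
apply: expRN_le_div => //.
- exact: powR_le1 (ltW (inv_tau_gt0 _)).
- exact: expRN_le_powR (ltW (inv_tau_gt0 _)) q_k0.
set Sig := \sum_(k < T) _.
have S_Sig : S - a <= Sig.
  apply: sumrB1_le => [j|j /q_j qb]; first exact: powR_ge0.
  exact: ge0_ler_powR (ltW (inv_tau_gt0 j)) _ _ (q_ge0 j) (le_trans (q_ge0 j) qb) qb.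
apply: le_trans S_Sig _.
by rewrite ler_peMr ?sumr_ge0 ?invf_ge1 // => j _; exact: powR_ge0.
Qed.

End TaskIdPrediction.

Theorem theorem5 (R : realType) (X : Type) (T : nat) (task : X -> 'I_T)
    (x : X) (tau : 'I_T -> R) (htau : forall k, 0 < tau k) :
  (* (i) *)
  (forall (p : 'I_T -> R) (delta : R),
     is_TP p ->
     (H_TP task p x <= delta%:E)%E ->
     forall k : 'I_T,
       (H_OOD task (fun j => (p j `^ (tau j)^-1)%R) k x <=
        Order.max (delta / tau k)%:E
                  (neglog (1 - (1 - expR (- delta)) `^ (tau k)^-1)%R))%E)
  /\
  (* (ii) *)
  (forall (q : 'I_T -> R) (delta : 'I_T -> R),
     is_OOD q ->
     (forall k, (H_OOD task q k x <= (delta k)%:E)%E) ->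
     (H_TP task
        (fun k => (q k `^ (tau k)^-1 / \sum_(j < T) q j `^ (tau j)^-1)%R) x <=
      (\sum_(k < T) (task x == k)%:R * delta k / tau k
       + (\sum_(k < T) (1 - expR (- delta k)) `^ (tau k)^-1)
         / (\sum_(k < T) (task x == k)%:R
              * (1 - (1 - expR (- delta k)) `^ (tau k)^-1)))%:E)%E).
Proof. by split; [exact: TP_to_OOD | exact: OOD_to_TP]. Qed.
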